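(* Every simple undirected graph $G$ is the intersection graph of an exactly hittable hypergraph $\mathcal{X}=(\mathcal{U},\mathcal{F})$. Further, if $G$ is a connected chordal graph, then $G$ is the intersection graph of an exactly hittable family of subtrees of a tree.
   Context: The intersection graph of a family $\mathcal{F}$ of sets has one vertex $v_F$ for each $F\in\mathcal{F}$, with $v_{F_i}v_{F_j}$ an edge iff $F_i\cap F_j\neq\emptyset$. A hypergraph (set system) $(\mathcal{U},\mathcal{F})$ is exactly hittable if there is $T\subseteq\mathcal{U}$ with $|T\cap F|=1$ for all $F\in\mathcal{F}$; for a family of subtrees of a tree, exact hittability means there is a set $T$ of tree nodes meeting every subtree in exactly one node. A chordal graph is a graph with no induced cycle of length at least $4$. *)

From mathcomp Require Import all_boot.
Set Implicit Arguments. Unset Strict Implicit. Unset Printing Implicit Defensive.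

Definition simple_graph (V : finType) (e : rel V) : Prop :=
  symmetric e /\ irreflexive e.

Definition connected_graph (V : finType) (e : rel V) : Prop :=
  forall x y : V, connect e x y.

Definition is_cycle (V : finType) (e : rel V) (c : seq V) : Prop :=
  uniq c /\ 3 <= size c /\
  forall i, i < size c -> forall x0 : V,
    e (nth x0 c i) (nth x0 c (i.+1 %% size c)).

Definition induced_cycle (V : finType) (e : rel V) (c : seq V) : Prop :=
  uniq c /\ 3 <= size c /\
  forall i j, i < size c -> j < size c -> forall x0 : V,
    e (nth x0 c i) (nth x0 c j) <->
    (j = i.+1 %% size c \/ i = j.+1 %% size c).

Definition chordal (V : finType) (e : rel V) : Prop :=
  forall c : seq V, induced_cycle e c -> size c < 4.

Definition is_tree (W : finType) (t : rel W) : Prop :=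
  0 < #|W| /\ simple_graph t /\ connected_graph t /\
  forall c : seq W, ~ is_cycle t c.

Definition subtree (W : finType) (t : rel W) (S : {set W}) : Prop :=
  S != set0 /\
  forall x y, x \in S -> y \in S ->
    connect [rel a b | [&& t a b, a \in S & b \in S]] x y.

(* G = (V, e) is the intersection graph of the family (F v)_{v in V}, the sets
   being pairwise distinct (so the family has exactly one member per vertex). *)
Definition is_intersection_graph (V : finType) (e : rel V) (U : finType)
    (F : V -> {set U}) : Prop :=
  injective F /\
  forall u v : V, u != v -> (e u v <-> F u :&: F v != set0).

Definition exactly_hittable (V : finType) (U : finType) (F : V -> {set U}) : Prop :=
  exists T : {set U}, forall v : V, #|T :&: F v| = 1.

(* Part one: represent v by its edge star, the pairs (v, v) and (v, w), (w, v) for the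
   edges vw.  Two stars meet exactly in a shared edge, and the diagonal meets each star
   in the single pair (v, v).

   Part two: a chordal graph has a perfect elimination ordering, i.e. a ranking in which
   the earlier (lower-ranked) neighbours of every vertex form a clique.  This follows
   from Dirac's lemma, whose heart is that a shortest path between two non-adjacent
   neighbours of u avoiding the closed neighbourhood of u would close up with u into an
   induced cycle of length at least four.  Hang the node of each vertex below the node
   of its last earlier neighbour, and give every vertex a private leaf; vertex v is
   modelled by its node, its leaf and the nodes of the later vertices having v as an
   earlier neighbour.  The perfect elimination property makes these sets connected and
   makes them meet exactly along edges, and the private leaves form the exact hitting
   set.  A common root above all parentless nodes keeps the forest a tree. *)

From mathcomp Require Import all_boot zify.
Set Implicit Arguments. Unset Strict Implicit. Unset Printing Implicit Defensive.

Section EdgeStars.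
Variables (V : finType) (e : rel V).
Hypothesis e_sym : symmetric e.

Definition edge_star (v : V) : {set V * V} :=
  [set p | ((p.1 == v) || (p.2 == v)) && ((p.1 == p.2) || e p.1 p.2)].

Lemma diag_edge_star v : [set p : V * V | p.1 == p.2] :&: edge_star v = [set (v, v)].
Proof.
apply/setP => -[a b]; rewrite !inE /= xpair_eqE.
have [<- | ab] := eqVneq a b; first by case: (a == v).
by apply/esym/andP => -[/eqP av /eqP bv]; rewrite av bv eqxx in ab.
Qed.

Lemma edge_star_intersection_graph : is_intersection_graph e edge_star.
Proof.
split.
  by move=> a b ab; have := diag_edge_star a; rewrite ab diag_edge_star => /set1_inj [].
move=> u v uv; split=> [uv_adj | /set0Pn[[a b]]].
  by apply/set0Pn; exists (u, v); rewrite !inE /= !eqxx uv_adj !orbT.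
rewrite !inE /= => /andP[/andP[u_ab ab_edge] /andP[v_ab _]].
have [[a_u b_v] | [a_v b_u]] : a = u /\ b = v \/ a = v /\ b = u.
  move: v_ab uv; case/orP: u_ab => /eqP-> /orP[] /eqP->; rewrite ?eqxx //.
  - by left.
  - by right.
- by move: ab_edge; rewrite a_u b_v (negbTE uv).
- by move: ab_edge; rewrite a_v b_u eq_sym (negbTE uv) e_sym.
Qed.

Lemma edge_star_exactly_hittable : exactly_hittable edge_star.
Proof. by exists [set p : V * V | p.1 == p.2] => v; rewrite diag_edge_star cards1. Qed.

End EdgeStars.

Lemma modS_small n i : i < n -> i.+1 %% n = if i.+1 == n then 0 else i.+1.
Proof. by move=> lt_in; case: eqP => [->|ne]; rewrite ?modnn // modn_small; lia. Qed.

Section Cycles.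
Variables (V : finType) (e : rel V).

Lemma chordless_induced_cycle (c : seq V) : symmetric e -> irreflexive e ->
  uniq c -> 3 <= size c ->
  (forall i j x0, i < j < size c -> e (nth x0 c i) (nth x0 c j) <->
     j = i.+1 \/ i = 0 /\ j = (size c).-1) ->
  induced_cycle e c.
Proof.
move=> e_sym e_irr c_uniq c3 chordless; do 2!split=> //; move=> i j.
wlog le_ij : i j / i <= j.
  move=> Hwlog i_lt j_lt x0; case: (leqP i j) => [|/ltnW] le; first exact: Hwlog.
  by rewrite e_sym Hwlog // or_comm.
move=> i_lt j_lt x0; rewrite !modS_small //.
case: (ltngtP i j) => [lt_ij||<-]; last by rewrite e_irr; split=> //; case: eqP; lia.
  apply: iff_trans (chordless _ _ _ _) _; first by rewrite lt_ij.
  by case: eqP; case: eqP; split; lia.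
lia.
Qed.

Lemma cycle_neighbours (c : seq V) x : is_cycle e c -> x \in c ->
  exists y z, [/\ y \in c, z \in c, y != z, e x y & e z x].
Proof.
move=> [c_uniq [c3 c_adj]] xc; set n := size c in c3 c_adj.
have n_gt0 : 0 < n by lia.
have i_lt : index x c < n by rewrite index_mem.
set i := index x c in i_lt.
set k := (i + n.-1) %% n.
have k_lt : k < n by rewrite ltn_mod.
have k_succ : k.+1 %% n = i.
  by rewrite -addn1 modnDml -addnA addn1 prednK // modnDr modn_small.
exists (nth x c (i.+1 %% n)), (nth x c k); split; rewrite ?mem_nth ?ltn_mod //.
- rewrite nth_uniq ?ltn_mod // -addn1 eqn_modDl !modn_small; lia.
- by have := c_adj i i_lt x; rewrite nth_index.
- by have := c_adj k k_lt x; rewrite k_succ nth_index.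
Qed.

End Cycles.

Definition parent_rel (W : eqType) (par : W -> W) : rel W :=
  [rel x y | (x != y) && ((par x == y) || (par y == x))].

Section ParentTree.
Variables (W : finType) (par : W -> W) (rk : W -> nat) (root : W).
Hypotheses (par_root : par root = root)
           (rk_par : forall x, x != root -> rk (par x) < rk x).

Local Notation t := (parent_rel par).

Lemma parent_rel_sym : symmetric t.
Proof. by move=> x y; rewrite /parent_rel /= eq_sym orbC. Qed.

Lemma parent_rel_par x : x != root -> t x (par x).
Proof.
move/rk_par=> lt_par; rewrite /parent_rel /= eqxx andbT.
by apply: contraTneq lt_par => <-; rewrite ltnn.
Qed.

Lemma parent_rel_rk x y : t x y -> rk y <= rk x -> par x = y.
Proof.
rewrite /parent_rel /= => /andP[xy /orP[/eqP // | /eqP par_y]] rk_yx.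
have y_root : y != root by apply: contraNneq xy => y_r; rewrite -par_y y_r par_root.
by have := rk_par y_root; rewrite par_y ltnNge rk_yx.
Qed.

Lemma connect_parent_root x : connect t x root.
Proof.
have [n] := ubnP (rk x); elim: n x => // n IHn x rk_x.
have [-> | x_root] := eqVneq x root; first exact: connect0.
apply: connect_trans (connect1 (parent_rel_par x_root)) (IHn _ _).
by have := rk_par x_root; lia.
Qed.

Lemma parent_rel_acyclic (c : seq W) : ~ is_cycle t c.
Proof.
move=> c_cycle; have [_ [c3 _]] := c_cycle.
have c_x0 : nth root c 0 \in c by rewrite mem_nth // (ltn_trans _ c3).
case: (arg_maxnP rk c_x0) => x xc x_max.
have [y [z [yc zc yz xy zx]]] := cycle_neighbours c_cycle xc.
rewrite parent_rel_sym in zx.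
by rewrite -(parent_rel_rk xy (x_max y yc)) (parent_rel_rk zx (x_max z zc)) eqxx in yz.
Qed.

Lemma is_tree_parent_rel : is_tree t.
Proof.
split; first by apply/card_gt0P; exists root.
split; first by split; [exact: parent_rel_sym | move=> x; rewrite /parent_rel /= eqxx].
split; last exact: parent_rel_acyclic.
move=> x y; apply: connect_trans (connect_parent_root x) _.
by rewrite (sym_connect_sym parent_rel_sym) connect_parent_root.
Qed.

Lemma subtree_parent_closed (S : {set W}) s : s \in S ->
  (forall x, x \in S -> x != s -> (x != root) && (par x \in S)) -> subtree t S.
Proof.
move=> sS S_par; split; first by apply/set0Pn; exists s.
set tS := [rel a b | [&& t a b, a \in S & b \in S]].
have tS_sym : connect_sym tS.
  by apply: sym_connect_sym => a b /=; rewrite parent_rel_sym [(a \in S) && _]andbC.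
have to_s x : x \in S -> connect tS x s.
  have [n] := ubnP (rk x); elim: n x => // n IHn x rk_x xS.
  have [-> | xs] := eqVneq x s; first exact: connect0.
  have /andP[x_root par_xS] := S_par x xS xs.
  apply: connect_trans (connect1 _) (IHn _ _ par_xS).
    by rewrite /= parent_rel_par ?xS.
  by have := rk_par x_root; lia.
by move=> x y xS yS; rewrite (connect_trans (to_s x xS)) // tS_sym to_s.
Qed.

End ParentTree.

Section Detours.
Variables (V : finType) (e : rel V).
Hypotheses (e_sym : symmetric e) (e_irr : irreflexive e) (e_chordal : chordal e).

(* A shortest detour is chordless,
   so it closes up with u into an induced cycle of length at least four. *)
Record detour (u : V) (k : nat) (f : nat -> V) : Prop := Detour {
  detour_step : forall i, i < k -> e (f i) (f i.+1);
  detour_first : e u (f 0);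
  detour_last : e u (f k);
  detour_ends_neq : f 0 != f k;
  detour_ends_nonadj : ~~ e (f 0) (f k);
  detour_inner : forall i, 0 < i < k -> (f i != u) && ~~ e u (f i) }.

Lemma detour_splice u k f a b : detour u k f -> a < b <= k ->
  (b < k -> e (f a) (f b.+1)) -> (b = k -> f a = f k) ->
  detour u (k - (b - a)) (fun i => if i <= a then f i else f (i + (b - a))).
Proof.
case=> step u_first u_last ends_neq ends_nonadj inner lt_abk short_step short_end.
have new_last :
    (if k - (b - a) <= a then f (k - (b - a)) else f (k - (b - a) + (b - a))) = f k.
  case: leqP => ?; last by congr f; lia.
  have -> : k - (b - a) = a by lia.
  by apply: short_end; lia.
split=> /=; rewrite ?new_last //.
- move=> i; case: (ltngtP i a) => [lt_ia | lt_ai | ->] lt_i.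
  + by apply: step; lia.
  + by rewrite addSn; apply: step; lia.
  + by rewrite (_ : a.+1 + (b - a) = b.+1); [apply: short_step|]; lia.
- by move=> i /andP[i_gt0 i_lt]; case: leqP => ?; apply: inner; lia.
Qed.

Lemma detour_long u k f : detour u k f -> 1 < k.
Proof.
case=> step _ _ ends_neq ends_nonadj.
case: k step ends_neq ends_nonadj => [|[|//]] step; first by rewrite eqxx.
by rewrite step.
Qed.

Lemma detour_neq u k f j : detour u k f -> j <= k -> f j != u.
Proof.
case=> _ u_first u_last _ _ inner le_jk.
have adj_neq x : e u x -> x != u by apply: contraTneq => ->; rewrite e_irr.
case: (posnP j) => [-> | j_gt0]; first exact: adj_neq u_first.
case: (ltnP j k) => [lt_jk | ge_jk].
  by have /andP[] // : (f j != u) && ~~ e u (f j) by apply: inner; rewrite j_gt0.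
by rewrite (_ : j = k) ?(adj_neq _ u_last) //; lia.
Qed.

Lemma chordless_detour_cycle u k f : detour u k f ->
  (forall a b, a < b <= k -> f a != f b) ->
  (forall a b, a < b <= k -> e (f a) (f b) -> b = a.+1) ->
  induced_cycle e (u :: mkseq f k.+1).
Proof.
move=> df f_neq chordless; have k_gt1 := detour_long df.
have size_c : size (u :: mkseq f k.+1) = k.+2 := congr1 S (size_mkseq f k.+1).
apply: chordless_induced_cycle; rewrite ?size_c //; last first.
- move=> i j x0 /andP[lt_ij]; rewrite ltnS => le_j.
  case: i j lt_ij le_j => [|i] [|j] //= lt_ij le_j; rewrite !nth_mkseq //; try lia.
  + split=> [u_fj | [[->] | [_ [->]]]]; [|exact: detour_first df|exact: detour_last df].
    case: (ltnP j k) => [lt_jk|]; last by right; split=> //; congr _.+1; lia.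
    case: (posnP j) => [->|j_gt0]; first by left.
    have /andP[_] : (f j != u) && ~~ e u (f j) by apply: (detour_inner df); rewrite j_gt0.
    by rewrite u_fj.
  + split=> [/chordless -> | [[->] | []] //]; [by left | lia |].
    by apply: (detour_step df); lia.
- lia.
- rewrite cons_uniq /mkseq map_inj_in_uniq ?iota_uniq; last first.
    move=> a b; rewrite !mem_iota /= => lt_a lt_b fab.
    by case: (ltngtP a b) => // lt; [move: (f_neq a b) | move: (f_neq b a)];
      rewrite ?fab eqxx; lia.
  rewrite andbT; apply/negP => /mapP[j]; rewrite mem_iota => lt_j u_fj.
  have le_jk : j <= k by lia.
  by move: (detour_neq df le_jk); rewrite -u_fj eqxx.
Qed.

Lemma no_detour u k f : ~ detour u k f.
Proof.
have [n] := ubnP k; elim: n k f => // n IHn k f lt_kn df.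
have no_shortcut a b : a < b <= k ->
    (b < k -> e (f a) (f b.+1)) -> (b = k -> f a = f k) -> False.
  move=> lt_ab short_step short_end.
  by apply: IHn (detour_splice df lt_ab short_step short_end); lia.
have f_neq a b : a < b <= k -> f a != f b.
  move=> lt_ab; apply/eqP => fab; apply: (no_shortcut a b lt_ab) => [lt_bk | <-] //.
  by rewrite fab; apply: (detour_step df).
have chordless a b : a < b <= k -> e (f a) (f b) -> b = a.+1.
  move=> /andP[lt_ab le_bk] fab; case: (ltngtP a.+1 b) => [lt_a1b | | //]; last lia.
  have b_gt0 : 0 < b by lia.
  case: (no_shortcut a b.-1); rewrite ?prednK // => *; lia.
have := e_chordal (chordless_detour_cycle df f_neq chordless).
by rewrite /= size_map size_iota; have := detour_long df; lia.
Qed.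

Lemma detour_path_adj u x y p : e u x -> e u y -> x != y ->
  path e x (rcons p y) -> all [pred z | (z != u) && ~~ e u z] p -> e x y.
Proof.
move=> ux uy xy /(pathP x) xp /allP p_far; apply/negPn/negP => nxy.
apply: (no_detour (u := u) (k := (size p).+1) (f := nth x (x :: rcons p y))).
have nth_last_y : nth x (rcons p y) (size p) = y by rewrite nth_rcons ltnn eqxx.
split=> /=; rewrite ?nth_last_y //.
- by move=> i lt_i; apply: xp; rewrite size_rcons.
- move=> [|i] //=; rewrite ltnS => lt_i; rewrite nth_rcons lt_i.
  exact: p_far (mem_nth x lt_i).
Qed.

End Detours.

Section Simplicial.
Variables (V : finType) (e : rel V).

Definition simplicial_in (S : {set V}) w : Prop :=
  {in S &, forall y z, e w y -> e w z -> y != z -> e y z}.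

Definition clique (S : {set V}) := {in S &, forall y z, y != z -> e y z}.

Lemma simplicial_in_sub (S1 S2 : {set V}) w :
  S1 \subset S2 -> simplicial_in S2 w -> simplicial_in S1 w.
Proof. by move=> /subsetP sub12 simp y z /sub12 yS /sub12 zS; apply: simp. Qed.

Lemma clique_simplicial (S : {set V}) w : clique S -> simplicial_in S w.
Proof. by move=> S_clique y z yS zS _ _; apply: S_clique. Qed.

Lemma cliqueVnonadj (S : {set V}) :
  clique S \/ exists y z, [/\ y \in S, z \in S, y != z & ~~ e y z].
Proof.
case: (pickP [pred p : V * V | [&& p.1 \in S, p.2 \in S, p.1 != p.2 & ~~ e p.1 p.2]]).
  by move=> [y z] /and4P[yS zS yz nyz]; right; exists y, z.
move=> none; left=> y z yS zS yz; apply/negPn.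
by have := none (y, z); rewrite /= yS zS yz => /negbT.
Qed.

End Simplicial.

Section FarComponent.
Variables (V : finType) (e : rel V).
Hypotheses (e_sym : symmetric e) (e_irr : irreflexive e) (e_chordal : chordal e).
Variables (S : {set V}) (u w0 : V).

(* [far_border] is a minimal separator of u from [far_comp], the component of w0 in
   G[S] minus the closed neighbourhood of u. *)
Definition far := [set z in S | (z != u) && ~~ e u z].

Definition far_rel := [rel a b | [&& e a b, a \in far & b \in far]].

Definition far_comp := [set z | connect far_rel w0 z].

Definition far_border := [set y in S :\: far_comp | [exists c in far_comp, e y c]].

Hypothesis w0_far : w0 \in far.

Local Notation C := far_comp.
Local Notation D := far_border.

Lemma far_comp_far z : z \in C -> z \in far.
Proof.
rewrite inE => /(closed_connect _) <- //.
by move=> a b /and3P[_ -> ->].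
Qed.

Lemma far_comp_step c y : c \in C -> y \in far -> e c y -> y \in C.
Proof.
move=> cC y_far cy; have := cC; rewrite !inE => /connect_trans; apply.
by rewrite connect1 //= cy y_far far_comp_far.
Qed.

Lemma far_comp_nbr w y : w \in C -> y \in S -> e w y -> y \in C :|: D.
Proof.
move=> wC yS wy; rewrite inE; case: (boolP (y \in far)) => y_far.
  by rewrite (far_comp_step wC y_far wy).
have yC : y \notin C by apply: contra y_far; apply: far_comp_far.
rewrite (negbTE yC) /= inE in_setD yC yS /=.
by apply/existsP; exists w; rewrite wC e_sym.
Qed.

Lemma far_border_adj y : y \in D -> e u y.
Proof.
rewrite inE in_setD => /andP[/andP[/negbTE yC yS] /existsP[c /andP[cC yc]]].
case: (boolP (y \in far)) => [y_far | ].
  by rewrite (far_comp_step cC y_far) // e_sym in yC.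
rewrite inE yS /= negb_and !negbK => /orP[/eqP y_u|//].
by have := far_comp_far cC; rewrite inE -y_u yc !andbF.
Qed.

Lemma far_comp_border_card : u \in S -> #|C :|: D| < #|S|.
Proof.
move=> uS; rewrite (cardsD1 u S) uS add1n ltnS subset_leq_card //.
apply/subsetP => z zCD; rewrite in_setD1; apply/andP; split.
  apply: contraTneq zCD => ->; rewrite inE negb_or; apply/andP; split.
    by apply: contra (far_comp_far (z:=u)) _; rewrite inE eqxx andbF.
  exact: contraFN (far_border_adj (y:=u)) (e_irr u).
case/setUP: zCD => [/far_comp_far|]; rewrite inE; first by case/andP.
by rewrite in_setD => /andP[/andP[]].
Qed.

Lemma far_comp_simplicial w : w \in C -> simplicial_in e (C :|: D) w -> simplicial_in e S w.
Proof.
move=> wC simp y z yS zS wy wz; apply: simp => //; exact: far_comp_nbr wC _ _.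
Qed.

Lemma far_border_clique : clique e D.
Proof.
move=> x y xD yD xy.
have := xD; rewrite inE in_setD => /andP[_ /existsP[cx /andP[cxC x_cx]]].
have := yD; rewrite inE in_setD => /andP[_ /existsP[cy /andP[cyC y_cy]]].
have far_sym : connect_sym (far_rel).
  by apply: sym_connect_sym => a b /=; rewrite e_sym [(a \in _) && _]andbC.
have /connectP[p cx_p cy_last] : connect (far_rel) cx cy.
  by rewrite !inE in cxC cyC; rewrite (connect_trans _ cyC) // far_sym.
apply: (detour_path_adj e_sym e_irr e_chordal (p := cx :: p))
  (far_border_adj xD) (far_border_adj yD) xy _ _.
  rewrite rcons_cons /= x_cx rcons_path -cy_last e_sym y_cy andbT.
  by apply: sub_path cx_p => a b /and3P[].
apply/allP => z /(path_connect cx_p) cx_z.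
have : z \in C by rewrite inE (connect_trans _ cx_z) // -inE.
by case/far_comp_far/setIdP.
Qed.

End FarComponent.

Section Elimination.
Variables (V : finType) (e : rel V).
Hypotheses (e_sym : symmetric e) (e_irr : irreflexive e) (e_chordal : chordal e).

(* Dirac's lemma.  Recurse into the smaller set C :|: D: its simplicial vertices
   lying in C stay simplicial in S, and since D is a clique the recursion can be
   steered into C. *)
Lemma exists_far_simplicial (S : {set V}) u w0 : u \in S -> w0 \in far e S u ->
  exists2 w, w \in far e S u & simplicial_in e S w.
Proof.
have [n] := ubnP #|S|; elim: n S u w0 => // n IHn S u w0 S_n uS w0_far.
set C := far_comp e S u w0; set D := far_border e S u w0.
have H_n : #|C :|: D| < n.
  exact: leq_trans (far_comp_border_card e_sym e_irr w0_far uS) _.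
have lift_simplicial w : w \in C -> simplicial_in e (C :|: D) w ->
    exists2 w, w \in far e S u & simplicial_in e S w.
  by move=> wC simp; exists w; [exact: far_comp_far wC | exact: far_comp_simplicial simp].
have recurse a c : a \in C :|: D -> c \in far e (C :|: D) a ->
    (exists2 w, w \in far e S u & simplicial_in e S w) \/
    exists2 w, w \in D & w \in far e (C :|: D) a.
  move=> aH c_far; have [w w_far simp] := IHn _ a c H_n aH c_far.
  have /setIdP[/setUP[wC | wD] _] := w_far; first by left; exact: lift_simplicial wC simp.
  by right; exists w.
have D_clique := far_border_clique e_sym e_irr e_chordal w0_far.
have border_comp d c : d \in D -> c \in C -> ~~ e d c ->
    exists2 w, w \in far e S u & simplicial_in e S w.
  move=> dD cC ndc; have dH : d \in C :|: D by rewrite inE dD orbT.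
  have c_far : c \in far e (C :|: D) d.
    rewrite inE inE cC ndc andbT /=; apply: contraTneq dD => <-.
    by rewrite inE in_setD cC.
  case: (recurse d c dH c_far) => // -[w wD /setIdP[_ /andP[wd ndw]]].
  by rewrite D_clique // eq_sym in ndw.
case: (cliqueVnonadj e (C :|: D)) => [H_clique | [y [z [yH zH yz nyz]]]].
  apply: (lift_simplicial w0); last exact: clique_simplicial.
  by rewrite inE connect0.
case/setUP: yH => [yC | yD]; case/setUP: zH => [zC | zD].
- have z_far : z \in far e (C :|: D) y by rewrite inE inE zC eq_sym yz nyz.
  have yH : y \in C :|: D by rewrite inE yC.
  case: (recurse y z yH z_far) => [// | [w wD /setIdP[_ /andP[_ nyw]]]].
  by apply: border_comp wD yC _; rewrite e_sym.
- by apply: border_comp zD yC _; rewrite e_sym.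
- exact: border_comp yD zC nyz.
- by rewrite D_clique in nyz.
Qed.

Lemma exists_simplicial (S : {set V}) x : x \in S ->
  exists2 w, w \in S & simplicial_in e S w.
Proof.
move=> xS; case: (cliqueVnonadj e S) => [S_clique | [y [z [yS zS yz nyz]]]].
  by exists x => //; apply: clique_simplicial.
have z_far : z \in far e S y by rewrite inE zS eq_sym yz nyz.
by have [w /setIdP[wS _] simp] := exists_far_simplicial yS z_far; exists w.
Qed.

Lemma exists_perfect_elimination (S : {set V}) : exists r : V -> nat,
  {in S &, injective r} /\
  {in S, forall v, simplicial_in e [set a in S | r a < r v] v}.
Proof.
have [n] := ubnP #|S|; elim: n S => // n IHn S S_n.
have [-> | [x xS]] := set_0Vmem S; first by exists (fun=> 0); split=> ?; rewrite inE.
have [w wS w_simp] := exists_simplicial xS.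
have [|r [r_inj r_simp]] := IHn (S :\ w); first by rewrite (cardsD1 w S) wS in S_n.
pose top := (\max_a r a).+1.
have lt_top a : r a < top by rewrite ltnS leq_bigmax.
exists (fun v => if v == w then top else r v); split.
  move=> a b aS bS /=; case: eqP => [-> | /eqP aw]; case: eqP => [-> | /eqP bw] //.
  - by move=> top_b; have := lt_top b; rewrite -top_b ltnn.
  - by move=> a_top; have := lt_top a; rewrite a_top ltnn.
  - by apply: r_inj; rewrite in_setD1 ?aw ?bw.
move=> v vS /=; case: eqP => [-> | /eqP vw].
  by apply: simplicial_in_sub w_simp; apply/subsetP => a /setIdP[].
apply: simplicial_in_sub (r_simp v _); last by rewrite in_setD1 vw.
apply/subsetP => a /setIdP[aS]; case: eqP => [_ | /eqP aw].
  by rewrite ltnNge ltnW.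
by rewrite inE in_setD1 aw aS.
Qed.

End Elimination.

Section CliqueTree.
Variables (V : finType) (e : rel V) (r : V -> nat).
Hypotheses (e_sym : symmetric e) (r_inj : injective r)
           (r_peo : forall v, simplicial_in e [set a | r a < r v] v).

Definition earlier v a := e v a && (r a < r v).

Lemma earlier_adj v a b : earlier v a -> earlier v b -> a != b -> e a b.
Proof. by move=> /andP[va ra] /andP[vb rb]; apply: (@r_peo v); rewrite ?inE. Qed.

Definition last_earlier v : option V :=
  if [pick a | earlier v a] is Some a0
  then Some [arg max_(a > a0 | earlier v a) r a] else None.

Variant last_earlier_spec v : option V -> Prop :=
  | LastEarlierNone of (forall a, ~~ earlier v a) : last_earlier_spec v None
  | LastEarlierSome a of earlier v a & (forall b, earlier v b -> r b <= r a) :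
      last_earlier_spec v (Some a).

Lemma last_earlierP v : last_earlier_spec v (last_earlier v).
Proof.
rewrite /last_earlier; case: pickP => [a0 va0 | none].
  by case: arg_maxnP => // a va a_max; constructor.
by constructor=> a; rewrite none.
Qed.

(* Some (v, false) is the node of v, Some (v, true) its private leaf, None the root. *)
Local Notation node := (option (V * bool)).

Definition tree_parent (x : node) : node :=
  match x with
  | Some (v, true) => Some (v, false)
  | Some (v, false) => omap (fun a => (a, false)) (last_earlier v)
  | None => None
  end.

Definition tree_height (x : node) : nat :=
  if x is Some (v, b) then (r v).*2 + b + 1 else 0.

Lemma tree_height_parent x : x != None -> tree_height (tree_parent x) < tree_height x.
Proof.
case: x => [[v []]|] //= _; first lia.
by case: last_earlierP => [_ | a /andP[_ ra] _] /=; lia.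
Qed.

Definition clique_tree := parent_rel tree_parent.

Lemma clique_tree_is_tree : is_tree clique_tree.
Proof. exact: (is_tree_parent_rel (root := None) erefl tree_height_parent). Qed.

Definition tree_model (v : V) : {set node} :=
  [set x | match x with
           | Some (w, true) => w == v
           | Some (w, false) => (w == v) || earlier w v
           | None => false
           end].

Lemma tree_model_subtree v : subtree clique_tree (tree_model v).
Proof.
apply: (subtree_parent_closed tree_height_parent (s := Some (v, false))).
  by rewrite inE eqxx.
move=> [[w []]|]; rewrite inE //= => w_v neq_v; first by rewrite inE w_v.
move: w_v neq_v; have [-> | wv] /= := eqVneq w v; first by rewrite eqxx.
move=> wv_earlier _; case: last_earlierP => [/(_ v) | a wa a_max].
  by rewrite wv_earlier.
rewrite inE /=; have [// | av] := eqVneq a v.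
have lt_va : r v < r a by rewrite ltn_neqAle (inj_eq r_inj) eq_sym av a_max.
by rewrite /earlier (earlier_adj wa wv_earlier av) lt_va.
Qed.

Lemma tree_model_inj : injective tree_model.
Proof.
move=> a b ab; have : Some (a, true) \in tree_model b by rewrite -ab inE.
by rewrite inE => /eqP.
Qed.

Lemma tree_model_meet u v : u != v -> e u v <-> tree_model u :&: tree_model v != set0.
Proof.
move=> uv; split=> [uv_adj | /set0Pn[[[w []]|]]]; rewrite ?inE //=.
- apply/set0Pn; case: (ltngtP (r u) (r v)) => [lt_uv | lt_vu | /r_inj eq_uv].
  + by exists (Some (v, false)); rewrite !inE /= eqxx /earlier e_sym uv_adj lt_uv orbT.
  + by exists (Some (u, false)); rewrite !inE /= eqxx /earlier uv_adj lt_vu orbT.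
  + by rewrite eq_uv eqxx in uv.
- by case/andP => /eqP-> /eqP wv; rewrite wv eqxx in uv.
- case/andP => /orP[/eqP wu | wu] /orP[/eqP wv | wv].
  + by rewrite -wu -wv eqxx in uv.
  + by rewrite -wu; case/andP: wv.
  + by rewrite -wv e_sym; case/andP: wu.
  + exact: earlier_adj wu wv uv.
Qed.

Lemma tree_model_exactly_hittable : exactly_hittable tree_model.
Proof.
exists [set x : node | if x is Some (_, true) then true else false] => v.
rewrite (_ : _ :&: _ = [set Some (v, true)]) ?cards1 //.
apply/setP => -[[w []]|]; rewrite !inE //=; first by apply/eqP/eqP => [-> | [->]].
by apply/esym/eqP.
Qed.

End CliqueTree.

Lemma chordal_subtree_model (V : finType) (e : rel V) :
  symmetric e -> irreflexive e -> chordal e ->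
  exists (W : finType) (t : rel W) (F : V -> {set W}),
    is_tree t /\ (forall v, subtree t (F v)) /\
    is_intersection_graph e F /\ exactly_hittable F.
Proof.
move=> e_sym e_irr e_chordal.
have [r [r_inj r_simp]] := exists_perfect_elimination e_sym e_irr e_chordal [set: V].
have {}r_inj : injective r by move=> a b; apply: r_inj; rewrite inE.
have r_peo v : simplicial_in e [set a | r a < r v] v.
  by apply: simplicial_in_sub (r_simp v (in_setT v)); apply/subsetP => a; rewrite !inE.
exists (option (V * bool) : finType), (clique_tree e r), (tree_model e r).
split; first exact: clique_tree_is_tree.
split; first exact: tree_model_subtree.
split; last exact: tree_model_exactly_hittable.
by split=> [|u v]; [exact: tree_model_inj | exact: tree_model_meet].
Qed.

Theorem theorem10 :
  (forall (V : finType) (e : rel V), simple_graph e ->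
     exists (U : finType) (F : V -> {set U}),
       is_intersection_graph e F /\ exactly_hittable F) /\
  (forall (V : finType) (e : rel V),
     simple_graph e -> connected_graph e -> chordal e ->
     exists (W : finType) (t : rel W) (F : V -> {set W}),
       is_tree t /\ (forall v, subtree t (F v)) /\
       is_intersection_graph e F /\ exactly_hittable F).
Proof.
split=> [V e [e_sym _] | V e [e_sym e_irr] _ e_chordal].
  exists (V * V : finType)%type, (edge_star e).
  by split; [exact: edge_star_intersection_graph | exact: edge_star_exactly_hittable].
exact: chordal_subtree_model.
Qed.
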